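(* Let $L$ be an oriented classical or virtual link represented by a signed Gauss diagram $D$, and let $\mathcal{FQ}(L)$ be the forbidden quiver obtained from $D$. Then $\mathcal{FQ}(L)$ is invariant under Reidemeister moves; in particular, the isomorphism class of $\mathcal{FQ}(L)$ as a directed graph with signed edges is an invariant of classical and virtual links.
   Context: An oriented (classical or virtual) link with $n$ components is represented by a signed Gauss diagram: $n$ oriented circles, one per component, together with a finite set of arrows, each arrow running from the point of a circle corresponding to the over-strand of a crossing to the point corresponding to the under-strand, and decorated with the sign $\pm 1$ of the crossing (its local writhe). Virtual links are equivalence classes of Gauss diagrams under the Gauss-diagram Reidemeister moves: R1 (add or delete an arrow whose two endpoints are adjacent on one circle, i.e. intersecting no other arrow), R2 (add or delete two arrows pointing in the same direction with opposite signs, whose heads are adjacent and whose tails are adjacent), and R3 (slide the endpoints of three arrows forming a triangle past one another). Classical links are those representable by planar diagrams. The forbidden moves are $F_H$: interchange two adjacent arrowheads on a circle, and $F_T$: interchange two adjacent arrow tails on a circle. Using forbidden moves together with Reidemeister moves, any Gauss diagram can be reduced to one in which no arrow has both endpoints on the same circle and, for each ordered pair $(j,k)$ of distinct circles, all arrows from circle $j$ to circle $k$ are parallel with the same sign (pairs of opposite sign having been cancelled by R2 moves). The forbidden quiver $\mathcal{FQ}(L)$ is obtained from such a reduced diagram by shrinking each circle to a vertex: its vertices are the components of $L$, and it has one arrow from $j$ to $k$ of sign $\varepsilon$ for each arrow of sign $\varepsilon$ from circle $j$ to circle $k$ in the reduced diagram. (Equivalently, $m$ parallel arrows of sign $\varepsilon$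 from $j$ to $k$ may be recorded as a single arrow with integer label $\varepsilon m$.) *)

From mathcomp Require Import all_boot.
Set Implicit Arguments. Unset Strict Implicit. Unset Printing Implicit Defensive.

(* An arrow endpoint: ((arrow name, is_head), sign); sign true = +1, false = -1.
   is_head = false : the endpoint is the tail (over-strand point),
   is_head = true  : the endpoint is the head (under-strand point). *)
Definition letter := ((nat * bool) * bool)%type.
Definition lname (l : letter) : nat := l.1.1.
Definition ishead (l : letter) : bool := l.1.2.
Definition lsign (l : letter) : bool := l.2.
Definition tail_pt (a : nat) (s : bool) : letter := ((a, false), s).
Definition head_pt (a : nat) (s : bool) : letter := ((a, true), s).
Definition partner (l : letter) : letter := ((lname l, ~~ ishead l), lsign l).

(* A Gauss diagram with n = size D circles: circle i is the cyclic word
   nth [::] D i of arrow endpoints read along its orientation. *)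
Definition gauss := seq (seq letter).
Definition word (D : gauss) (i : nat) : seq letter := nth [::] D i.

(* Well-formedness: every arrow has exactly one tail and one head, same sign. *)
Definition wf (D : gauss) : bool :=
  uniq (map fst (flatten D)) && all (fun l => partner l \in flatten D) (flatten D).

(* Identifications of diagrams (no basepoint on circles, arrows unnamed). *)
Definition mv_rot (D D' : gauss) : Prop :=
  exists i k, i < size D /\ D' = set_nth [::] D i (rot k (word D i)).
Definition mv_rename (D D' : gauss) : Prop :=
  exists f : nat -> nat, injective f /\
    D' = map (map (fun l => ((f (lname l), ishead l), lsign l))) D.

Definition mv_R1 (D D' : gauss) : Prop :=
  exists i u v a s, i < size D /\
    (word D i = u ++ [:: tail_pt a s; head_pt a s] ++ v \/
     word D i = u ++ [:: head_pt a s; tail_pt a s] ++ v) /\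
    D' = set_nth [::] D i (u ++ v).

Definition mv_R2 (D D' : gauss) : Prop :=
  exists a b sa, a != b /\
    (exists i, i < size D /\ infix [:: tail_pt a sa; tail_pt b (~~ sa)] (word D i)) /\
    (exists j, j < size D /\
       (infix [:: head_pt a sa; head_pt b (~~ sa)] (word D j) \/
        infix [:: head_pt b (~~ sa); head_pt a sa] (word D j))) /\
    D' = map (filter (fun l => (lname l != a) && (lname l != b))) D.

Definition swap_adj (x y : letter) (D D' : gauss) : Prop :=
  exists i u v, i < size D /\ word D i = u ++ x :: y :: v /\
    D' = set_nth [::] D i (u ++ y :: x :: v).
Definition swap_either (x y : letter) (D D' : gauss) : Prop :=
  swap_adj x y D D' \/ swap_adj y x D D'.

(* R3: three arrows a (top->middle), b (top->bottom), c (middle->bottom)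
   forming a triangle: the three pairs of adjacent endpoints are exchanged. *)
Definition mv_R3 (D D' : gauss) : Prop :=
  exists a b c sa sb sc, uniq [:: a; b; c] /\
    exists D1 D2,
      swap_either (tail_pt a sa) (tail_pt b sb) D D1 /\
      swap_either (head_pt a sa) (tail_pt c sc) D1 D2 /\
      swap_either (head_pt b sb) (head_pt c sc) D2 D'.

Definition mv_FH (D D' : gauss) : Prop :=
  exists x y, ishead x /\ ishead y /\ swap_adj x y D D'.
Definition mv_FT (D D' : gauss) : Prop :=
  exists x y, ~~ ishead x /\ ~~ ishead y /\ swap_adj x y D D'.

Definition reid_step (D D' : gauss) : Prop :=
  wf D /\ wf D' /\
  (mv_rot D D' \/ mv_rename D D' \/ mv_R1 D D' \/ mv_R2 D D' \/ mv_R3 D D').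
Definition full_step (D D' : gauss) : Prop :=
  reid_step D D' \/ (wf D /\ wf D' /\ (mv_FH D D' \/ mv_FT D D')).

Inductive eqv_clos (S : gauss -> gauss -> Prop) : gauss -> gauss -> Prop :=
| ec_refl D : eqv_clos S D D
| ec_step D D' : S D D' -> eqv_clos S D D'
| ec_sym D D' : eqv_clos S D D' -> eqv_clos S D' D
| ec_trans D1 D2 D3 : eqv_clos S D1 D2 -> eqv_clos S D2 D3 -> eqv_clos S D1 D3.

Definition reid_equiv := eqv_clos reid_step.
Definition full_equiv := eqv_clos full_step.

Definition arrows (D : gauss) (j k : nat) (s : bool) : nat :=
  count (fun l => ~~ ishead l && (lsign l == s) && (head_pt (lname l) s \in word D k))
        (word D j).

Definition reduced (D : gauss) : Prop :=
  wf D /\ (forall j s, arrows D j j s = 0) /\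
  (forall j k, j != k -> arrows D j k true = 0 \/ arrows D j k false = 0).

(* forbidden quiver of a reduced diagram: vertices 0..size D - 1 (circles),
   FQ D j k s = number of arrows of sign s from vertex j to vertex k *)
Definition FQ (D : gauss) (j k : nat) (s : bool) : nat := arrows D j k s.

(** For circles j <> k, the signed number of arrows from j to k (positive
    minus negative) is unchanged by every move.  Rotations, relabellings and
    the adjacent swaps making up R3, F_H and F_T only permute the endpoints
    on each circle; R1 deletes an arrow inside one circle; R2 deletes one
    positive and one negative arrow between the same two circles.  In a
    reduced diagram all arrows from j to k carry one sign, so this signed
    count determines the forbidden quiver. *)

From mathcomp Require Import all_boot all_algebra zify.
Set Implicit Arguments. Unset Strict Implicit. Unset Printing Implicit Defensive.

Import GRing.Theory.

Lemma word_set_nth (D : gauss) i w m :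
  word (set_nth [::] D i w) m = if m == i then w else word D m.
Proof. by rewrite /word nth_set_nth. Qed.

Lemma size_set_nth_in (D : gauss) i (w : seq letter) :
  i < size D -> size (set_nth [::] D i w) = size D.
Proof. by move=> ltiD; rewrite size_set_nth; apply/maxn_idPr. Qed.

Lemma word_map (D : gauss) (F : seq letter -> seq letter) m :
  F [::] = [::] -> word (map F D) m = F (word D m).
Proof.
move=> F0; rewrite /word; case: (ltnP m (size D)) => HmD.
  by rewrite (nth_map [::]).
by rewrite !nth_default ?size_map.
Qed.

Lemma mem_word_flatten D i x : x \in word D i -> x \in flatten D.
Proof.
rewrite /word; case: (ltnP i (size D)) => HiD; last by rewrite nth_default.
by move=> Hx; apply/flattenP; exists (nth [::] D i) => //; apply: mem_nth.
Qed.

Lemma uniq_map_inj_in (T1 T2 : eqType) (f : T1 -> T2) (s : seq T1) :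
  uniq (map f s) -> {in s &, injective f}.
Proof.
elim: s => //= x s IH /andP[fx_notin us] y z.
rewrite !inE => /predU1P[->|ys] /predU1P[->|zs] // Efyz.
- by case/negP: fx_notin; rewrite Efyz map_f.
- by case/negP: fx_notin; rewrite -Efyz map_f.
- exact: IH.
Qed.

Lemma letter_fst (l : letter) : l.1 = (lname l, ishead l).
Proof. by case: l => [[]]. Qed.

Section UniqueEndpoints.

Variable D : gauss.
Hypothesis uniqD : uniq (map fst (flatten D)).

Lemma uniq_word i : uniq (word D i).
Proof.
elim: D uniqD i => [|w E IH] /=; first by move=> _ i; rewrite /word nth_nil.
rewrite map_cat cat_uniq => /and3P[uw _ uE] [|i] /=; last exact: IH.
exact: map_uniq uw.
Qed.

Lemma word_fst_inj i k l l' :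
  l \in word D i -> l' \in word D k -> l.1 = l'.1 -> i = k /\ l = l'.
Proof.
elim: D uniqD i k => [|w E IH] /=; first by move=> _ i k; rewrite /word nth_nil.
rewrite map_cat cat_uniq => /and3P[uw wE uE].
have disj_w x y m : x \in w -> y \in word E m -> x.1 <> y.1.
  move=> xw ym Exy; case/hasP: wE; exists y.1; last by apply/mapP; exists x.
  by apply/mapP; exists y => //; apply: mem_word_flatten ym.
case=> [|i] [|k]; rewrite /word /= => Hl Hl' Ell'.
- by split=> //; apply: (uniq_map_inj_in uw).
- by case: (disj_w _ _ _ Hl Hl' Ell').
- by case: (disj_w _ _ _ Hl' Hl (esym Ell')).
- by case: (IH uE i k Hl Hl' Ell') => -> ->.
Qed.

End UniqueEndpoints.

Definition perm_words (D D' : gauss) : Prop :=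
  forall m, perm_eq (word D m) (word D' m).

Lemma arrows_perm_words D D' j k s :
  perm_words D D' -> arrows D j k s = arrows D' j k s.
Proof.
move=> DD'; rewrite /arrows (permP (DD' j)).
by apply: eq_count => l; rewrite (perm_mem (DD' k)).
Qed.

Lemma perm_words_set_nth (D : gauss) i w :
  perm_eq (word D i) w -> perm_words D (set_nth [::] D i w).
Proof. by move=> Diw m; rewrite word_set_nth; case: eqP => [->|]. Qed.

Lemma arrows_rename (D : gauss) (f : nat -> nat) j k s : injective f ->
  arrows (map (map (fun l => ((f (lname l), ishead l), lsign l))) D) j k s
  = arrows D j k s.
Proof.
move=> inj_f; set g := fun l : letter => ((f (lname l), ishead l), lsign l).
have inj_g : injective g.
  move=> [[x h] e] [[x' h'] e']; rewrite /g /lname /ishead /lsign /=.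
  by case=> /inj_f-> -> ->.
rewrite /arrows !word_map // count_map; apply: eq_count => l /=.
by rewrite -[head_pt _ s]/(g (head_pt (lname l) s)) mem_map.
Qed.

Definition delete_arrow (a : nat) (D : gauss) : gauss :=
  map (filter (fun l => lname l != a)) D.

Lemma word_delete_arrow a D m :
  word (delete_arrow a D) m = filter (fun l => lname l != a) (word D m).
Proof. exact: word_map. Qed.

Lemma uniq_delete_arrow a (D : gauss) :
  uniq (map fst (flatten D)) -> uniq (map fst (flatten (delete_arrow a D))).
Proof. by apply: subseq_uniq; rewrite -filter_flatten map_subseq ?filter_subseq. Qed.

Section DeleteArrow.

Variables (D : gauss) (a : nat) (sa : bool) (i i' : nat).
Hypothesis uniqD : uniq (map fst (flatten D)).
Hypothesis tail_a : tail_pt a sa \in word D i.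
Hypothesis head_a : head_pt a sa \in word D i'.

Lemma mem_word_name l m : l \in word D m -> lname l = a ->
  l = tail_pt a sa /\ m = i \/ l = head_pt a sa /\ m = i'.
Proof.
move=> lm la; case hl: (ishead l); [right | left].
- have l1 : l.1 = (head_pt a sa).1 by rewrite (letter_fst l) la hl.
  by have [-> ->] := word_fst_inj uniqD lm head_a l1.
- have l1 : l.1 = (tail_pt a sa).1 by rewrite (letter_fst l) la hl.
  by have [-> ->] := word_fst_inj uniqD lm tail_a l1.
Qed.

Lemma mem_tail_word j : (tail_pt a sa \in word D j) = (j == i).
Proof.
apply/idP/eqP => [tj|->] //.
by case: (word_fst_inj uniqD tj tail_a erefl).
Qed.

Lemma counted_arrow_name j k s l : l \in word D j ->
  ~~ ishead l && (lsign l == s) && (head_pt (lname l) s \in word D k)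
    && (lname l == a)
  = [&& s == sa, k == i' & l == tail_pt a sa].
Proof.
move=> lj; apply/idP/idP.
- case/andP=> /andP[/andP[tl /eqP <-] hk] /eqP la.
  have [[lt _] | [lh _]] := mem_word_name lj la; last by rewrite lh in tl.
  move: hk; rewrite lt /= => hk; have [-> _] := word_fst_inj uniqD hk head_a erefl.
  by rewrite !eqxx.
- by case/and3P=> /eqP-> /eqP-> /eqP->; rewrite /= !eqxx head_a.
Qed.

Lemma arrows_delete_arrow j k s :
  arrows D j k s = arrows (delete_arrow a D) j k s + [&& s == sa, j == i & k == i'].
Proof.
set P := fun l : letter =>
  ~~ ishead l && (lsign l == s) && (head_pt (lname l) s \in word D k).
set keep := fun l : letter => lname l != a.
have kept : arrows (delete_arrow a D) j k s = count (predI keep P) (word D j).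
  rewrite /arrows !word_delete_arrow count_filter; apply: eq_count => l /=.
  rewrite mem_filter /P /keep.
  have -> : lname (head_pt (lname l) s) = lname l by [].
  by case: (lname l != a); rewrite ?andbF ?andbT.
have deleted : count (predI (predC keep) P) (word D j)
             = [&& s == sa, j == i & k == i'].
  rewrite (eq_in_count (a2 := fun l => [&& s == sa, k == i' & l == tail_pt a sa])).
    case: (s == sa) (k == i') => [] [] /=; rewrite ?count_pred0 ?andbF //.
    by rewrite (count_uniq_mem _ (uniq_word uniqD j)) mem_tail_word andbT.
  by move=> l lj; rewrite -(counted_arrow_name k s lj) /= /keep negbK andbC.
by rewrite kept -deleted -!count_filter count_predC size_filter.
Qed.

End DeleteArrow.

Lemma perm_words_R1 (D : gauss) i w a s : uniq (map fst (flatten D)) ->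
  perm_eq (word D i) (tail_pt a s :: head_pt a s :: w) ->
  perm_words (delete_arrow a D) (set_nth [::] D i w).
Proof.
move=> uniqD Diw.
have tail_i : tail_pt a s \in word D i by rewrite (perm_mem Diw) mem_head.
have head_i : head_pt a s \in word D i by rewrite (perm_mem Diw) !inE eqxx orbT.
have name_a := mem_word_name uniqD tail_i head_i.
move=> m; rewrite word_delete_arrow word_set_nth.
case: eqVneq => [->|m_neq_i].
- apply: perm_trans (perm_filter _ Diw) _; rewrite /= /lname /= eqxx /=.
  have : uniq (tail_pt a s :: head_pt a s :: w).
    by rewrite -(perm_uniq Diw) (uniq_word uniqD).
  rewrite /= inE => /andP[/norP[_ tail_w] /andP[head_w _]].
  rewrite (all_filterP _) //; apply/allP => l lw; apply/negP => /eqP la.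
  have li : l \in word D i by rewrite (perm_mem Diw) !inE lw !orbT.
  have [[lt _] | [lt _]] := name_a _ _ li la.
  - by move: tail_w; rewrite -lt lw.
  - by move: head_w; rewrite -lt lw.
- rewrite (all_filterP _) //; apply/allP => l lm; apply/negP => /eqP la.
  by case: (name_a _ _ lm la) => -[_ mi]; rewrite mi eqxx in m_neq_i.
Qed.

Lemma arrows_R2 (D : gauss) a b sa i i' j k s : a != b ->
  uniq (map fst (flatten D)) ->
  tail_pt a sa \in word D i -> tail_pt b (~~ sa) \in word D i ->
  head_pt a sa \in word D i' -> head_pt b (~~ sa) \in word D i' ->
  arrows D j k s
  = arrows (map (filter (fun l => (lname l != a) && (lname l != b))) D) j k s
    + ((j == i) && (k == i')).
Proof.
move=> a_neq_b uniqD tail_a tail_b head_a head_b.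
have -> : map (filter (fun l => (lname l != a) && (lname l != b))) D
          = delete_arrow a (delete_arrow b D).
  by rewrite /delete_arrow -map_comp; apply: eq_map => w; rewrite /= -filter_predI.
have in_del_b x m : lname x = a -> x \in word D m -> x \in word (delete_arrow b D) m.
  by move=> xa xm; rewrite word_delete_arrow mem_filter xa a_neq_b.
have tail_a' := in_del_b (tail_pt a sa) i erefl tail_a.
have head_a' := in_del_b (head_pt a sa) i' erefl head_a.
rewrite (arrows_delete_arrow uniqD tail_b head_b).
rewrite (arrows_delete_arrow (uniq_delete_arrow b uniqD) tail_a' head_a').
(* exactly one of the arrows [a], [b] has sign [s] *)
by rewrite -addnA; congr (_ + _); case: s (sa) (j == i) (k == i') => [] [] [] [].
Qed.

Definition net_arrows (D : gauss) (j k : nat) : int :=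
  ((arrows D j k true)%:Z - (arrows D j k false)%:Z)%R.

Definition net_equiv (D D' : gauss) : Prop :=
  size D = size D' /\ forall j k, j != k -> net_arrows D j k = net_arrows D' j k.

Lemma net_equiv_refl D : net_equiv D D.
Proof. by []. Qed.

Lemma net_equiv_sym D D' : net_equiv D D' -> net_equiv D' D.
Proof. by case=> sizeE netE; split=> // j k jk; rewrite netE. Qed.

Lemma net_equiv_trans D1 D2 D3 :
  net_equiv D1 D2 -> net_equiv D2 D3 -> net_equiv D1 D3.
Proof.
case=> size12 net12 [size23 net23].
by split=> [|j k jk]; rewrite ?size12 // net12 // net23.
Qed.

Lemma eqv_clos_min (S E : gauss -> gauss -> Prop) :
  (forall D, E D D) -> (forall D D', E D D' -> E D' D) ->
  (forall D1 D2 D3, E D1 D2 -> E D2 D3 -> E D1 D3) ->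
  (forall D D', S D D' -> E D D') ->
  forall D D', eqv_clos S D D' -> E D D'.
Proof. by move=> Erefl Esym Etrans SE D D'; elim; eauto. Qed.

Lemma net_equiv_arrows D D' : size D = size D' ->
  (forall j k s, j != k -> arrows D j k s = arrows D' j k s) -> net_equiv D D'.
Proof. by move=> sizeE arrowsE; split=> // j k jk; rewrite /net_arrows !arrowsE. Qed.

Lemma net_equiv_perm_words D D' :
  size D = size D' -> perm_words D D' -> net_equiv D D'.
Proof.
by move=> sizeE DD'; apply: net_equiv_arrows => // j k s _; apply: arrows_perm_words.
Qed.

Lemma net_equiv_swap x y D D' : swap_adj x y D D' -> net_equiv D D'.
Proof.
case=> i [u [v [ltiD [Di ->]]]]; apply: net_equiv_perm_words.
  by rewrite size_set_nth_in.
apply: perm_words_set_nth; rewrite Di perm_cat2l.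
by rewrite -[x :: y :: v]/([:: x] ++ [:: y] ++ v) perm_catCA.
Qed.

Lemma net_equiv_swap_either x y D D' : swap_either x y D D' -> net_equiv D D'.
Proof. by case; apply: net_equiv_swap. Qed.

Lemma net_equiv_rot D D' : mv_rot D D' -> net_equiv D D'.
Proof.
case=> i [k [ltiD ->]]; apply: net_equiv_perm_words; first by rewrite size_set_nth_in.
by apply: perm_words_set_nth; rewrite perm_sym perm_rot.
Qed.

Lemma net_equiv_rename D D' : mv_rename D D' -> net_equiv D D'.
Proof.
case=> f [inj_f ->]; apply: net_equiv_arrows; first by rewrite size_map.
by move=> j k s _; rewrite arrows_rename.
Qed.

Lemma net_equiv_R1 D D' : wf D -> mv_R1 D D' -> net_equiv D D'.
Proof.
case/andP=> uniqD _ [i [u [v [a [s [ltiD [Di ->]]]]]]].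
have Diw : perm_eq (word D i) (tail_pt a s :: head_pt a s :: (u ++ v)).
  by case: Di => ->; apply/permP => p; rewrite /= !count_cat /=; lia.
have tail_i : tail_pt a s \in word D i by rewrite (perm_mem Diw) mem_head.
have head_i : head_pt a s \in word D i by rewrite (perm_mem Diw) !inE eqxx orbT.
apply: net_equiv_arrows => [|j k t jk]; first by rewrite size_set_nth_in.
rewrite -(arrows_perm_words _ _ _ (perm_words_R1 uniqD Diw)).
rewrite (arrows_delete_arrow uniqD tail_i head_i).
have not_loop : (j == i) && (k == i) = false.
  by apply/negbTE; apply: contra jk => /andP[/eqP-> /eqP->].
by rewrite not_loop andbF addn0.
Qed.

Lemma mem_infix2 (T : eqType) (x y : T) w : infix [:: x; y] w -> x \in w /\ y \in w.
Proof. by case/infixP => [p [q ->]]; rewrite !mem_cat !inE !eqxx !orbT. Qed.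

Lemma net_equiv_R2 D D' : wf D -> mv_R2 D D' -> net_equiv D D'.
Proof.
case/andP=> uniqD _ [a [b [sa [a_neq_b [[i [_ tails]] [[i' [_ heads]] ->]]]]]].
have [tail_a tail_b] := mem_infix2 tails.
have [head_a head_b] : head_pt a sa \in word D i' /\ head_pt b (~~ sa) \in word D i'.
  by case: heads => /mem_infix2 [].
split=> [|j k _]; first by rewrite size_map.
rewrite /net_arrows !(arrows_R2 j k _ a_neq_b uniqD tail_a tail_b head_a head_b).
by rewrite !PoszD opprD addrACA subrr addr0.
Qed.

Lemma net_equiv_R3 D D' : mv_R3 D D' -> net_equiv D D'.
Proof.
case=> a [b [c [sa [sb [sc [_ [D1 [D2 [D_D1 [D1_D2 D2_D']]]]]]]]]].
apply: (net_equiv_trans (net_equiv_swap_either D_D1)).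
exact: net_equiv_trans (net_equiv_swap_either D1_D2) (net_equiv_swap_either D2_D').
Qed.

Lemma net_equiv_full_step D D' : full_step D D' -> net_equiv D D'.
Proof.
case=> [[wfD [_ [|[|[|[|]]]]]]|[_ [_ [|]]]].
- exact: net_equiv_rot.
- exact: net_equiv_rename.
- exact: net_equiv_R1.
- exact: net_equiv_R2.
- exact: net_equiv_R3.
- by case=> x [y [_ [_ /net_equiv_swap]]].
- by case=> x [y [_ [_ /net_equiv_swap]]].
Qed.

Lemma net_equiv_full_equiv D D' : full_equiv D D' -> net_equiv D D'.
Proof.
move=> DD'.
exact: (eqv_clos_min (@net_equiv_refl) (@net_equiv_sym) (@net_equiv_trans)
          (@net_equiv_full_step) DD').
Qed.

Lemma net_equiv_reid_equiv D D' : reid_equiv D D' -> net_equiv D D'.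
Proof.
have reid_net X Y : reid_step X Y -> net_equiv X Y.
  by move=> XY; apply: net_equiv_full_step; left.
move=> DD'.
exact: (eqv_clos_min (@net_equiv_refl) (@net_equiv_sym) (@net_equiv_trans)
          reid_net DD').
Qed.

Lemma reduced_arrows_net D D' j k s : reduced D -> reduced D' -> j != k ->
  net_arrows D j k = net_arrows D' j k -> arrows D j k s = arrows D' j k s.
Proof.
move=> [_ [_ signD]] [_ [_ signD']] jk; rewrite /net_arrows.
by move: (signD j k jk) (signD' j k jk); case: s; lia.
Qed.

Theorem mainTheorem1 (D D' R R' : gauss) :
  wf D -> wf D' -> reid_equiv D D' ->
  full_equiv D R -> reduced R ->
  full_equiv D' R' -> reduced R' ->
  size R = size R' /\ (forall j k s, FQ R j k s = FQ R' j k s).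
Proof.
move=> _ _ DD' DR redR D'R' redR'.
have [sizeRR' netRR'] : net_equiv R R'.
  apply: net_equiv_trans (net_equiv_sym (net_equiv_full_equiv DR)) _.
  exact: net_equiv_trans (net_equiv_reid_equiv DD') (net_equiv_full_equiv D'R').
split=> // j k s; rewrite /FQ.
case: (eqVneq j k) => [<-|jk]; first by case: redR redR' => _ [-> _] [_ [-> _]].
exact: reduced_arrows_net redR redR' jk (netRR' j k jk).
Qed.
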